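(* For every round $r$ and every validator $v$, at most one block of round $r$ authored by $v$ has a certificate.
   Context: There are $n=3f+1$ validators, at most $f$ Byzantine; honest validators create exactly one block per round, Byzantine ones may create several blocks in the same round (equivocation). Every valid block of round $r$ has as parents at least $2f+1$ blocks of round $r-1$ from distinct validators. A block $b$ of round $r'$ is a vote for a block $L$ of round $r<r'$ with author $a$ if the first block with author $a$ and round $r$ encountered in the deterministic depth-first search from $b$ along parent references is $L$ (so a block votes for at most one block of a given author and round). For a fixed wave length $w\ge 4$, a block $c$ of round $r+w-1$ is a certificate for a block $L$ of round $r$ if at least $2f+1$ of $c$'s parents (blocks of round $r+w-2$) are votes for $L$; a block ''has a certificate'' if some such $c$ exists. *)

From mathcomp Require Import all_boot.
Set Implicit Arguments. Unset Strict Implicit. Unset Printing Implicit Defensive.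

Definition first_some (A B : Type) (g : A -> option B) (s : seq A) : option B :=
  foldr (fun x acc => if g x is Some y then Some y else acc) None s.

(* Deterministic (preorder, parents in list order) depth-first search from [b]:
   the first encountered block with author [a] and round [rd].  [fuel] bounds
   the depth; since parents have strictly smaller rounds, fuel [round b]
   makes the search exhaustive. *)
Fixpoint dfs_find (Block V : eqType) (author : Block -> V) (round : Block -> nat)
    (parents : Block -> seq Block) (a : V) (rd : nat) (fuel : nat) (b : Block)
    : option Block :=
  if (author b == a) && (round b == rd) then Some b else
  match fuel with
  | 0 => None
  | k.+1 => first_some (dfs_find author round parents a rd k) (parents b)
  end.

Definition is_vote (Block V : eqType) (author : Block -> V) (round : Block -> nat)
    (parents : Block -> seq Block) (b L : Block) : bool :=
  (round L < round b) &&
  (dfs_find author round parents (author L) (round L) (round b) b == Some L).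

Definition is_certificate (f w : nat) (Block V : eqType) (author : Block -> V)
    (round : Block -> nat) (parents : Block -> seq Block) (c L : Block) : bool :=
  (round c == round L + w - 1) &&
  (2 * f + 1 <= size (undup [seq author p | p <- parents c &
                      (round p == round L + w - 2) &&
                      is_vote author round parents p L])).

Definition has_certificate (f w : nat) (Block V : eqType) (author : Block -> V)
    (round : Block -> nat) (parents : Block -> seq Block) (L : Block) : Prop :=
  exists c, is_certificate f w author round parents c L.

From mathcomp Require Import all_boot zify.

Set Implicit Arguments.
Unset Strict Implicit.
Unset Printing Implicit Defensive.

(* Two certificates for blocks of the same slot each carry 2f+1 voting
   validators of round r+w-2; among 3f+1 validators these two quorums share at
   least f+1, hence an honest one.  Its unique block of that round votes for
   both blocks, and a block votes for at most one block per author and round. *)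

Lemma setI_subsetN (T : finType) (A B Z : {set T}) :
  #|T| + #|Z| < #|A| + #|B| -> ~~ (A :&: B \subset Z).
Proof.
move=> big; apply/negP => /subset_leq_card sub_Z.
have le_T : #|A :|: B| <= #|T| by apply: max_card.
by move: big; rewrite -cardsUI ltnNge leq_add.
Qed.

Lemma card_undup_set (T : finType) (s : seq T) :
  #|[set x in undup s]| = size (undup s).
Proof. by rewrite cardsE; apply/card_uniqP/undup_uniq. Qed.

Section Votes.

Variables (Block V : eqType) (author : Block -> V) (round : Block -> nat).
Variable parents : Block -> seq Block.

Lemma is_vote_inj (b L L' : Block) :
  author L = author L' -> round L = round L' ->
  is_vote author round parents b L -> is_vote author round parents b L' ->
  L = L'.
Proof.
move=> eq_a eq_r /andP[_ /eqP vL] /andP[_ /eqP vL'].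
by move: vL'; rewrite -eq_a -eq_r vL => -[].
Qed.

End Votes.

Lemma certificate_quorum (f w : nat) (Block : eqType) (V : finType)
    (author : Block -> V) (round : Block -> nat) (parents : Block -> seq Block)
    (c L : Block) :
  is_certificate f w author round parents c L ->
  exists2 S : {set V}, 2 * f + 1 <= #|S| &
    forall x, x \in S -> exists2 p, author p = x &
      (round p == round L + w - 2) && is_vote author round parents p L.
Proof.
case/andP=> _; set s := undup _ => quorum.
exists [set x in s]; first by rewrite card_undup_set.
move=> x; rewrite inE mem_undup => /mapP[p].
by rewrite mem_filter => /andP[voter _] ->; exists p.
Qed.

Theorem lemma2 (f w : nat) (Block : eqType)
    (author : Block -> 'I_(3 * f + 1)) (round : Block -> nat)
    (parents : Block -> seq Block) (Byz : {set 'I_(3 * f + 1)}) :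
  4 <= w ->
  #|Byz| <= f ->
  (* honest validators create at most one block per round *)
  (forall b b', author b \notin Byz -> author b = author b' ->
     round b = round b' -> b = b') ->
  (* parents are from earlier rounds (DAG) *)
  (forall b p, p \in parents b -> round p < round b) ->
  (* validity: >= 2f+1 parents of the previous round from distinct validators *)
  (forall b, 0 < round b ->
     2 * f + 1 <= size (undup [seq author p | p <- parents b & round p == (round b).-1])) ->
  forall (r : nat) (v : 'I_(3 * f + 1)) (L L' : Block),
    round L = r -> author L = v -> round L' = r -> author L' = v ->
    has_certificate f w author round parents L ->
    has_certificate f w author round parents L' ->
    L = L'.
Proof.
move=> _ card_Byz honest _ _ r v L L' <- <- eq_r eq_a [c cert] [c' cert'].
have [S card_S voters] := certificate_quorum cert.
have [S' card_S' voters'] := certificate_quorum cert'.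
have : ~~ (S :&: S' \subset Byz).
  apply: setI_subsetN; rewrite card_ord.
  apply: leq_trans (leq_add card_S card_S').
  by apply: (@leq_ltn_trans (3 * f + 1 + f)); [rewrite leq_add2l | lia].
case/subsetPn=> x /setIP[/voters[p ax /andP[rp vote]] /voters'[p' ax' /andP[rp' vote']]].
rewrite -ax => honest_x.
have eq_p : p = p'.
  apply: honest => //; first by rewrite ax ax'.
  by rewrite (eqP rp) (eqP rp') eq_r.
by apply: (is_vote_inj (esym eq_a) (esym eq_r) vote); rewrite eq_p.
Qed.
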